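(* For any $\nu,\nu'\in\mathcal{M}(\mathbb{S}^{d-1})$ with Jordan decompositions $\nu=\nu_+-\nu_-$, $\nu'=\nu'_+-\nu'_-$, $$\sup_{x\in\mathbb{S}^{d-1}}|f(x;\nu)-f(x;\nu')|\le2\sqrt2\max\{\widetilde W_2(\nu_+,\nu'_+),\ \widetilde W_2(\nu_-,\nu'_-)\}.$$
   Context: $\sigma(u)=\max\{u,0\}$, $f(x;\nu)=\int_{\mathbb{S}^{d-1}}\sigma(\langle\theta,x\rangle)d\nu(\theta)$. On $\mathbb{R}_+\times\mathbb{S}^{d-1}$ use the cone metric $\widetilde{\mathrm{dist}}((r_1,\theta_1),(r_2,\theta_2))^2=(r_1-r_2)^2+2r_1r_2(1-\langle\theta_1,\theta_2\rangle)$, and let $W_2$ be the 2-Wasserstein distance w.r.t. it on $\mathcal{P}_2(\mathbb{R}_+\times\mathbb{S}^{d-1})$. The homogeneous projection $\mathsf h\mu\in\mathcal{M}_+(\mathbb{S}^{d-1})$ of $\mu$ is defined by $\int\phi\,d(\mathsf h\mu)=\int r\phi(\theta)\,d\mu(r,\theta)$ for continuous $\phi$. For nonnegative measures $\nu_1,\nu_2$: $\widetilde W_2(\nu_1,\nu_2)=\inf\{W_2(\mu_1,\mu_2):\mu_1,\mu_2\in\mathcal{P}_2(\mathbb{R}_+\times\mathbb{S}^{d-1}),\ \mathsf h\mu_1=\nu_1,\ \mathsf h\mu_2=\nu_2\}$. *)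

From HB Require Import structures.
From mathcomp Require Import all_boot all_order all_algebra.
From mathcomp Require Import all_classical all_reals all_analysis.
Set Implicit Arguments. Unset Strict Implicit. Unset Printing Implicit Defensive.
Import Order.TTheory GRing.Theory Num.Theory.
Import numFieldNormedType.Exports.
Local Open Scope classical_set_scope.
Local Open Scope ring_scope.

Section Defs.
Variables (R : realType) (d : nat).

Definition Rd := g_sigma_algebraType (@open 'rV[R]_d).

Definition inner (x y : 'rV[R]_d) : R := \sum_(i < d) x 0 i * y 0 i.

Definition usphere : set Rd := [set x | inner x x = 1].

Definition relu (u : R) : R := Num.max u 0.

(* Measures on S^{d-1} are represented as measures on the Borel sets of
   R^d that are concentrated on the usphere. *)
Definition on_sphere (nu : {measure set Rd -> \bar R}) : Prop :=
  nu (~` usphere) = 0%E.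

Definition charge_on_sphere (nu : {charge set Rd -> \bar R}) : Prop :=
  forall A, measurable A -> A `<=` ~` usphere -> nu A = 0%E.

Definition is_jordan_decomp (nu : {charge set Rd -> \bar R})
    (nup num : {measure set Rd -> \bar R}) : Prop :=
  (forall A, measurable A -> nu A = (nup A - num A)%E) /\
  exists P, [/\ measurable P, nup (~` P) = 0%E & num P = 0%E].

(* f(x; nu) = \int sigma(<theta, x>) d nu(theta)
            = \int sigma(<theta,x>) d nu_+ - \int sigma(<theta,x>) d nu_-
   where (nu_+, nu_-) is the Jordan decomposition of nu. *)
Definition fnet (x : Rd) (nup num : {measure set Rd -> \bar R}) : \bar R :=
  (\int[nup]_th (relu (inner th x))%:E - \int[num]_th (relu (inner th x))%:E)%E.

Definition cone : set (R * Rd)%type := [set p | 0 <= p.1 /\ usphere p.2].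

Definition cone_dist2 (p q : R * Rd) : R :=
  (p.1 - q.1) ^+ 2 + 2 * p.1 * q.1 * (1 - inner p.2 q.2).

(* P_2(R_+ x S^{d-1}): probability measures concentrated on the cone with
   finite second moment (the cone distance to the apex is r). *)
Definition P2 (mu : probability (R * Rd)%type R) : Prop :=
  mu (~` cone) = 0%E /\ (\int[mu]_p ((p.1) ^+ 2)%:E < +oo)%E.

Definition coupling (mu1 mu2 : probability (R * Rd)%type R)
    (g : probability ((R * Rd) * (R * Rd))%type R) : Prop :=
  (forall A, measurable A -> g (fst @^-1` A) = mu1 A) /\
  (forall A, measurable A -> g (snd @^-1` A) = mu2 A).

Definition W2 (mu1 mu2 : probability (R * Rd)%type R) : \bar R :=
  sqrte (ereal_inf [set (\int[g]_pq (cone_dist2 pq.1 pq.2)%:E)%E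
                   | g in coupling mu1 mu2]).

Definition hproj (mu : probability (R * Rd)%type R) (nu : {measure set Rd -> \bar R})
  : Prop :=
  forall A, measurable A ->
    nu A = (\int[mu]_p (p.1 * (\1_A p.2 : R))%:E)%E.

Definition Wt2 (nu1 nu2 : {measure set Rd -> \bar R}) : \bar R :=
  ereal_inf [set w | exists (mu1 mu2 : probability (R * Rd)%type R),
    [/\ P2 mu1, hproj mu1 nu1, P2 mu2, hproj mu2 nu2 & w = W2 mu1 mu2]].

End Defs.

From HB Require Import structures.
From mathcomp Require Import all_boot all_order all_algebra.
From mathcomp Require Import all_classical all_reals all_analysis.
From mathcomp Require Import measurable_realfun.
From mathcomp Require Import lra ring.

(* Let mu and mu' be lifts of nu and nu' to the cone (h mu = nu, h mu' = nu') and g a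
   coupling of them.  Then int sigma(<theta,x>) dnu = int r sigma(<theta,x>) dmu(r,theta),
   and since sigma is positively homogeneous and 1-Lipschitz, for |x| = 1 the integrand
   varies between coupled points by at most |<r1 theta1 - r2 theta2, x>|
   <= |r1 theta1 - r2 theta2|, which is exactly the cone distance.  So the two integrals
   differ by at most the L^2(g) transport cost, and optimizing over g and the lifts gives
   |int sigma(<theta,x>) d(nu - nu')| <= W~2(nu, nu').  Applying this to the positive and
   negative parts bounds |f(x;nu) - f(x;nu')| by W~2(nu_+,nu'_+) + W~2(nu_-,nu'_-), i.e.
   by twice the maximum, which is within the stated constant 2 sqrt 2. *)

Set Implicit Arguments. Unset Strict Implicit. Unset Printing Implicit Defensive.
Import Order.TTheory GRing.Theory Num.Theory.
Import numFieldNormedType.Exports.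
Local Open Scope classical_set_scope.
Local Open Scope ring_scope.

Section inner_product.
Variables (R : realType) (d : nat).
Implicit Types (u v w x : 'rV[R]_d).

Lemma innerDl u v w : inner (u + v) w = inner u w + inner v w.
Proof. by rewrite /inner -big_split; apply: eq_bigr => i _; rewrite mxE mulrDl. Qed.

Lemma innerNl u w : inner (- u) w = - inner u w.
Proof. by rewrite /inner -sumrN; apply: eq_bigr => i _; rewrite mxE mulNr. Qed.

Lemma innerZl a u w : inner (a *: u) w = a * inner u w.
Proof. by rewrite /inner mulr_sumr; apply: eq_bigr => i _; rewrite mxE mulrA. Qed.

Lemma innerC u w : inner u w = inner w u.
Proof. by apply: eq_bigr => i _; rewrite mulrC. Qed.

Lemma innerBl u v w : inner (u - v) w = inner u w - inner v w.
Proof. by rewrite innerDl innerNl. Qed.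

Lemma innerBr u v w : inner w (u - v) = inner w u - inner w v.
Proof. by rewrite !(innerC w) innerBl. Qed.

Lemma innerZr a u w : inner w (a *: u) = a * inner w u.
Proof. by rewrite !(innerC w) innerZl. Qed.

Lemma inner_ge0 u : 0 <= inner u u.
Proof. by apply: sumr_ge0 => i _; rewrite -expr2 sqr_ge0. Qed.

Lemma sqr_inner_le v x : inner x x = 1 -> inner v x ^+ 2 <= inner v v.
Proof.
move=> x1; have := inner_ge0 (v - inner v x *: x).
rewrite !(innerBl, innerBr, innerZl, innerZr) (innerC x v) x1; nra.
Qed.

Lemma cone_dist2_inner (r1 r2 : R) (t1 t2 : 'rV[R]_d) :
  inner t1 t1 = 1 -> inner t2 t2 = 1 ->
  cone_dist2 (r1, t1) (r2, t2) = inner (r1 *: t1 - r2 *: t2) (r1 *: t1 - r2 *: t2).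
Proof.
move=> t11 t21; rewrite !(innerBl, innerBr, innerZl, innerZr) (innerC t2 t1) t11 t21.
by rewrite /cone_dist2 /=; ring.
Qed.

Lemma cone_dist2_ge0 (r1 r2 : R) (t1 t2 : 'rV[R]_d) :
  inner t1 t1 = 1 -> inner t2 t2 = 1 ->
  0 <= cone_dist2 (r1, t1) (r2, t2).
Proof. by move=> t11 t21; rewrite cone_dist2_inner ?inner_ge0. Qed.

End inner_product.

Section relu.
Variable R : realType.
Implicit Types a b r : R.

Lemma relu_ge0 a : 0 <= relu a.
Proof. by rewrite /relu le_max lexx orbT. Qed.

Lemma relu_id a : 0 <= a -> relu a = a.
Proof. by move=> a0; rewrite /relu max_l. Qed.

Lemma mulr_relu r a : 0 <= r -> r * relu a = relu (r * a).
Proof. by move=> r0; rewrite /relu -{2}(mulr0 r) maxr_pMr. Qed.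

Lemma relu_dist a b : `|relu a - relu b| <= `|a - b|.
Proof.
have key (u v : R) : relu u - relu v <= `|u - v|.
  have := ler_norm (u - v); have := normr_ge0 (u - v); rewrite /relu.
  by case: (leP u 0) => u0; case: (leP v 0) => v0;
    rewrite ?(max_r u0) ?(max_r v0) ?(max_l (ltW u0)) ?(max_l (ltW v0)); lra.
by rewrite ler_norml key andbT lerNl opprB distrC key.
Qed.

End relu.

Lemma adde_le_mul_maxe (R : realFieldType) (c : R) (u v : \bar R) :
  2 <= c -> (0 <= u)%E -> (0 <= v)%E -> (u + v <= c%:E * maxe u v)%E.
Proof.
move=> c2 u0 v0; have m0 : (0 <= maxe u v)%E by rewrite le_max u0.
apply: (@le_trans _ _ (maxe u v + maxe u v)%E).
  by apply: leeD; rewrite le_max lexx ?orbT.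
move: m0; case: (maxe u v) => [m| |] // m0.
  by rewrite -EFinD -EFinM lee_fin; rewrite lee_fin in m0; nra.
by rewrite mulry gtr0_sg ?mul1e //; lra.
Qed.

Section relu_on_sphere.
Variables (R : realType) (d : nat).
Implicit Types (t x : 'rV[R]_d).

Lemma relu_inner_le1 t x : inner t t = 1 -> inner x x = 1 -> relu (inner t x) <= 1.
Proof.
move=> t1 x1; rewrite /relu ge_max ler01 andbT.
by have := sqr_inner_le t x1; rewrite t1; nra.
Qed.

Lemma sqr_relu_sub_le_cone_dist2 (r1 r2 : R) (t1 t2 x : 'rV[R]_d) :
  0 <= r1 -> 0 <= r2 -> inner t1 t1 = 1 -> inner t2 t2 = 1 -> inner x x = 1 ->
  (r1 * relu (inner t1 x) - r2 * relu (inner t2 x)) ^+ 2 <= cone_dist2 (r1, t1) (r2, t2).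
Proof.
move=> r10 r20 t11 t21 x1; rewrite !mulr_relu // cone_dist2_inner //.
apply: le_trans (sqr_inner_le _ x1).
rewrite innerBl !innerZl -real_normK ?num_real // -[X in _ <= X]real_normK ?num_real //.
by rewrite ler_sqr ?normr_ge0 // relu_dist.
Qed.

End relu_on_sphere.

Section pushforward_density.
Context (R : realType) (d1 d2 : measure_display).
Context (T : measurableType d1) (U : measurableType d2).
Variables (mu : {measure set T -> \bar R}) (nu : {measure set U -> \bar R}).
Variables (w : T -> R) (phi : T -> U).
Hypotheses (mw : measurable_fun setT w) (w0 : forall t, 0 <= w t).
Hypothesis mphi : measurable_fun setT phi.
Hypothesis nuE : forall A, measurable A ->
  nu A = (\int[mu]_t (w t * \1_A (phi t))%:E)%E.

Import HBNNSimple.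

Lemma integral_nnsfun_pushforward_density (h : {nnsfun U >-> R}) :
  (\int[nu]_u (h u)%:E = \int[mu]_t ((w t)%:E * (h (phi t))%:E))%E.
Proof.
rewrite integralT_nnsfun sintegralE.
transitivity (\int[mu]_t (\sum_(y \in range h)
    (y%:E * (w t * \1_(h @^-1` [set y]) (phi t))%:E)))%E; last first.
  apply: eq_integral => t _; rewrite /= fimfunE -fsumEFin //.
  rewrite ge0_mule_fsumr; last first.
    by move=> y; rewrite EFinM; exact: nnfun_muleindic_ge0.
  by apply: eq_fsbigr => y _; rewrite -!EFinM mulrCA.
have mh y : measurable (h @^-1` [set y]).
  by rewrite -[X in measurable X]setTI; exact: measurable_funP.
have mwh y : measurable_fun setT (fun t => w t * \1_(h @^-1` [set y]) (phi t)).
  by apply: measurable_funM => //; apply: measurableT_comp mphi; exact/measurable_indic.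
rewrite ge0_integral_fsum //; last 2 first.
  - by move=> y; apply/measurable_EFinP/measurable_funM.
  - move=> y t _; rewrite -EFinM lee_fin mulrCA mulr_ge0 //.
    by have := nnfun_muleindic_ge0 h y (phi t); rewrite -EFinM lee_fin.
apply: eq_fsbigr => y /[!inE] -[t _ <-].
rewrite ge0_integralZl ?lee_fin ?nuE //; first exact/measurable_EFinP.
by move=> t' _; rewrite lee_fin mulr_ge0.
Qed.

Lemma ge0_integral_pushforward_density (f : U -> \bar R) :
  measurable_fun setT f -> (forall u, (0 <= f u)%E) ->
  (\int[nu]_u f u = \int[mu]_t ((w t)%:E * f (phi t)))%E.
Proof.
move=> mf f0; pose h := nnsfun_approx measurableT mf.
have hf x : EFin \o h^~ x @ \oo --> f x.
  exact: (cvg_nnsfun_approx measurableT mf (fun x _ => f0 x)).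
have h_nd x : {homo (fun n => (h n x)%:E) : a b / (a <= b)%N >-> (a <= b)%E}.
  by move=> a b ab; rewrite lee_fin; exact/lefP/nd_nnsfun_approx.
have -> : (\int[nu]_u f u = limn (fun n => \int[nu]_u (EFin \o h n) u))%E.
  rewrite -monotone_convergence //.
  - by apply: eq_integral => x _; apply/esym/cvg_lim => //; exact: hf.
  - by move=> n; apply/measurable_EFinP; exact/measurable_funP.
  - by move=> n x _ /=; rewrite lee_fin.
  - by move=> x _; exact: h_nd.
have -> : (\int[mu]_t ((w t)%:E * f (phi t)) =
    limn (fun n => \int[mu]_t ((w t)%:E * (h n (phi t))%:E)))%E.
  rewrite -monotone_convergence //.
  - apply: eq_integral => x _; apply/esym/cvg_lim => //.
    by apply: cvgeZl => //; exact: hf.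
  - move=> n; apply/measurable_EFinP/measurable_funM => //.
    exact: measurableT_comp (measurable_funP _) mphi.
  - by move=> n x _ /=; rewrite -EFinM lee_fin mulr_ge0.
  - by move=> x _ a b ab; rewrite lee_wpmul2l ?lee_fin //; exact: h_nd.
by congr (limn _); apply/funext => n; exact: integral_nnsfun_pushforward_density.
Qed.

End pushforward_density.

Section measurability.
Variables (R : realType) (d : nat).
Local Notation Rd := (Rd R d).
Local Notation P := (R * Rd)%type.

Lemma measurable_fun_relu d' (T : measurableType d') (f : T -> R) :
  measurable_fun setT f -> measurable_fun setT (fun t => relu (f t)).
Proof. by move=> mf; apply: measurable_maxr. Qed.

Lemma measurable_coord (i : 'I_d) : measurable_fun setT (fun th : Rd => th 0 i).
Proof.
apply: (measurability _ (measurable_realfun.RGenOpens.measurableE R)).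
move=> _ [_ [a [b ->] <-]]; rewrite setTI; apply: sub_sigma_algebra.
by move: (@coord_continuous R 1 d 0 i) => /continuousP; apply; exact: interval_open.
Qed.

Lemma measurable_inner d' (T : measurableType d') (f g : T -> Rd) :
  measurable_fun setT f -> measurable_fun setT g ->
  measurable_fun setT (fun t => inner (f t) (g t)).
Proof.
move=> mf mg; apply: measurable_sum => i.
by apply: measurable_funM; apply: measurableT_comp (measurable_coord i) _.
Qed.

Lemma measurable_relu_inner (x : Rd) :
  measurable_fun setT (fun th : Rd => relu (inner th x)).
Proof. by apply: measurable_fun_relu; exact: measurable_inner. Qed.

Lemma measurable_relu_mul_relu_inner (x : Rd) :
  measurable_fun setT (fun p : P => relu p.1 * relu (inner p.2 x)).
Proof.
apply: measurable_funM; first by apply: measurable_fun_relu; exact: measurable_fst.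
exact: measurableT_comp (measurable_relu_inner x) measurable_snd.
Qed.

Lemma measurable_usphere : measurable (@usphere R d).
Proof.
rewrite -[X in measurable X]setTI.
exact: (measurable_inner (@measurable_id _ Rd _) (@measurable_id _ Rd _))
  measurableT _ (measurable_set1 (1 : R)).
Qed.

Lemma measurable_cone : measurable (@cone R d).
Proof.
have -> : @cone R d = fst @^-1` `[0, +oo[ `&` snd @^-1` (@usphere R d).
  by apply/seteqP; split => -[r t] /=; rewrite in_itv /= andbT.
apply: measurableI; rewrite -[X in measurable X]setTI.
- exact: (measurable_fst measurableT) (measurable_itv _).
- exact: (measurable_snd measurableT) measurable_usphere.
Qed.

Lemma measurable_cone_dist2 : measurable_fun setT (fun z : P * P => cone_dist2 z.1 z.2).
Proof.
have mr1 : measurable_fun setT (fun z : P * P => z.1.1) by exact: measurableT_comp.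
have mr2 : measurable_fun setT (fun z : P * P => z.2.1) by exact: measurableT_comp.
have mt1 : measurable_fun setT (fun z : P * P => z.1.2) by exact: measurableT_comp.
have mt2 : measurable_fun setT (fun z : P * P => z.2.2) by exact: measurableT_comp.
apply: measurable_funD; first exact/measurable_funX/measurable_funB.
apply: measurable_funM; first by apply: measurable_funM => //; exact: measurable_funM.
exact/measurable_funB/measurable_inner.
Qed.

End measurability.

Section square_of_mean_difference.
Context (R : realType) (dT : measure_display) (T : measurableType dT).
Variable g : probability T R.

Lemma integral_le_affine (G1 G2 E : T -> R) (c k a1 a2 : R) :
  measurable_fun setT G1 -> measurable_fun setT G2 -> measurable_fun setT E ->
  (forall z, 0 <= G1 z) -> (forall z, 0 <= G2 z) -> (forall z, 0 <= E z) ->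
  0 <= c -> 0 <= k ->
  (\forall z \ae g, c * G1 z <= c * G2 z + E z + k) ->
  (\int[g]_z (G1 z)%:E = a1%:E)%E -> (\int[g]_z (G2 z)%:E = a2%:E)%E ->
  ((c * a1)%:E <= (c * a2)%:E + \int[g]_z (E z)%:E + k%:E)%E.
Proof.
move=> mG1 mG2 mE G10 G20 E0 c0 k0 hG i1 i2.
have mG1E : measurable_fun setT (EFin \o G1) by exact/measurable_EFinP.
have mG2E : measurable_fun setT (EFin \o G2) by exact/measurable_EFinP.
have mEE : measurable_fun setT (EFin \o E) by exact/measurable_EFinP.
have mcG1 : measurable_fun setT (fun z => c%:E * (G1 z)%:E)%E.
  by apply: emeasurable_funM => //; exact: measurable_cst.
have mcG2 : measurable_fun setT (fun z => c%:E * (G2 z)%:E)%E.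
  by apply: emeasurable_funM => //; exact: measurable_cst.
rewrite (EFinM c a1) -i1 -ge0_integralZl_EFin //; last by move=> z _; rewrite lee_fin.
rewrite (EFinM c a2) -i2 -ge0_integralZl_EFin //; last by move=> z _; rewrite lee_fin.
have -> : (k%:E = \int[g]_z (cst k%:E z))%E.
  by rewrite integral_cst // -[LHS]mule1; congr (_ * _)%E; exact/esym/probability_setT.
rewrite -!(ge0_integralD _ measurableT) //; first last.
- by move=> z _; rewrite lee_fin.
- by move=> z _; rewrite -EFinM lee_fin mulr_ge0.
- exact: emeasurable_funD.
- by move=> z _; rewrite -EFinM -EFinD lee_fin addr_ge0 ?mulr_ge0.
apply: ae_ge0_le_integral => //.
- by move=> z _; rewrite -EFinM lee_fin mulr_ge0.
- by move=> z _; rewrite -EFinM -!EFinD lee_fin !addr_ge0 ?mulr_ge0.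
- by apply/emeasurable_funD => //; exact: emeasurable_funD.
by apply: filterS hG => z hz _; rewrite -!EFinM -!EFinD lee_fin.
Qed.

Lemma sqr_sub_integral_le (G1 G2 E : T -> R) (a1 a2 : R) :
  measurable_fun setT G1 -> measurable_fun setT G2 -> measurable_fun setT E ->
  (forall z, 0 <= G1 z) -> (forall z, 0 <= G2 z) -> (forall z, 0 <= E z) ->
  (\forall z \ae g, (G1 z - G2 z) ^+ 2 <= E z) ->
  (\int[g]_z (G1 z)%:E = a1%:E)%E -> (\int[g]_z (G2 z)%:E = a2%:E)%E ->
  (((a1 - a2) ^+ 2)%:E <= \int[g]_z (E z)%:E)%E.
Proof.
move=> mG1 mG2 mE G10 G20 E0 hG i1 i2.
wlog a21 : G1 G2 a1 a2 mG1 mG2 G10 G20 hG i1 i2 / a2 <= a1.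
  move=> wl; have [a21|a12] := leP a2 a1; first exact: (wl G1 G2 a1 a2).
  rewrite -sqrrN opprB; apply: (wl G2 G1) (ltW a12) => //.
  by apply: filterS hG => z; rewrite -sqrrN opprB.
(* Integrating 2c(G1 - G2) <= E + c^2 with c = a1 - a2 avoids any integrability
   requirement on G1 - G2. *)
have c0 : 0 <= 2 * (a1 - a2) by rewrite mulr_ge0 // subr_ge0.
have hG' : \forall z \ae g,
    2 * (a1 - a2) * G1 z <= 2 * (a1 - a2) * G2 z + E z + (a1 - a2) ^+ 2.
  by apply: filterS hG => z hz; have := sqr_ge0 (G1 z - G2 z - (a1 - a2)); nra.
have := integral_le_affine mG1 mG2 mE G10 G20 E0 c0 (sqr_ge0 _) hG' i1 i2.
have I0 : (0 <= \int[g]_z (E z)%:E)%E by apply: integral_ge0 => z _; rewrite lee_fin.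
case: (\int[g]_z (E z)%:E)%E I0 => [e| |] // _ h; last exact: leey.
by move: h; rewrite -!EFinD !lee_fin; nra.
Qed.

End square_of_mean_difference.

Section cone_measures.
Variables (R : realType) (d : nat).
Local Notation Rd := (Rd R d).
Local Notation P := (R * Rd)%type.
Implicit Types (mu : probability P R) (nu : {measure set Rd -> \bar R}).

Lemma P2_ae_cone mu : P2 mu -> \forall p \ae mu, cone p.
Proof.
case=> mc _; exists (~` (@cone R d)); split => //.
exact: (measurableC (@measurable_cone R d)).
Qed.

(* [hproj] only determines the density r up to mu-null sets; relu r is a version of it
   that is nonnegative everywhere. *)
Lemma hproj_integral mu nu (f : Rd -> \bar R) : P2 mu -> hproj mu nu ->
  measurable_fun setT f -> (forall t, (0 <= f t)%E) ->
  (\int[nu]_t f t = \int[mu]_p ((relu p.1)%:E * f p.2))%E.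
Proof.
move=> mu2 hmu mf f0.
apply: (ge0_integral_pushforward_density (w := fun p : P => relu p.1) (phi := snd)) => //.
- by apply: measurable_fun_relu; exact: measurable_fst.
- by move=> p; exact: relu_ge0.
move=> A mA; rewrite hmu //; apply: ae_eq_integral => //.
- apply/measurable_EFinP/measurable_funM; first exact: measurable_fst.
  by apply: measurableT_comp; [exact/measurable_indic|exact: measurable_snd].
- apply/measurable_EFinP/measurable_funM.
    by apply: measurable_fun_relu; exact: measurable_fst.
  by apply: measurableT_comp; [exact/measurable_indic|exact: measurable_snd].
by apply: filterS (P2_ae_cone mu2) => -[r t] [r0 _] _; rewrite /= relu_id.
Qed.

Lemma hproj_integral_relu mu nu (x : Rd) : P2 mu -> hproj mu nu ->
  (\int[nu]_t (relu (inner t x))%:E =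
   \int[mu]_p (relu p.1 * relu (inner p.2 x))%:E)%E.
Proof.
move=> mu2 hmu; rewrite (hproj_integral mu2 hmu).
- by apply: eq_integral => p _; rewrite EFinM.
- by apply/measurable_EFinP; exact: measurable_relu_inner.
- by move=> t; rewrite lee_fin relu_ge0.
Qed.

Section coupling.
Variables (mu1 mu2 : probability P R) (g : probability (P * P)%type R).
Hypothesis g12 : coupling mu1 mu2 g.

Lemma coupling_integral_fst (f : P -> \bar R) :
  measurable_fun setT f -> (forall p, (0 <= f p)%E) ->
  (\int[mu1]_p f p = \int[g]_z f z.1)%E.
Proof.
move=> mf f0; rewrite (eq_measure_integral (pushforward g fst)); last first.
  by move=> A mA _; exact/esym/(g12.1 A mA).
by rewrite ge0_integral_pushforward // preimage_setT.
Qed.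

Lemma coupling_integral_snd (f : P -> \bar R) :
  measurable_fun setT f -> (forall p, (0 <= f p)%E) ->
  (\int[mu2]_p f p = \int[g]_z f z.2)%E.
Proof.
move=> mf f0; rewrite (eq_measure_integral (pushforward g snd)); last first.
  by move=> A mA _; exact/esym/(g12.2 A mA).
by rewrite ge0_integral_pushforward // preimage_setT.
Qed.

Lemma coupling_ae_cone : P2 mu1 -> P2 mu2 -> \forall z \ae g, cone z.1 /\ cone z.2.
Proof.
move=> [mu1C _] [mu2C _].
have mC := measurableC (@measurable_cone R d).
have null_fst : g.-negligible (fst @^-1` (~` (@cone R d))).
  exists (fst @^-1` (~` (@cone R d))); split; last by [].
    by rewrite -[X in measurable X]setTI; exact: (measurable_fst measurableT).
  by rewrite g12.1.
have null_snd : g.-negligible (snd @^-1` (~` (@cone R d))).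
  exists (snd @^-1` (~` (@cone R d))); split; last by [].
    by rewrite -[X in measurable X]setTI; exact: (measurable_snd measurableT).
  by rewrite g12.2.
apply: negligibleS (negligibleU null_fst null_snd) => -[p q] /= pq.
by have [/= Cp|/= Cp] := pselect (@cone R d p); [right => Cq; apply: pq|left].
Qed.

End coupling.
End cone_measures.

Section wasserstein_bound.
Variables (R : realType) (d : nat).
Local Notation Rd := (Rd R d).
Local Notation P := (R * Rd)%type.
Implicit Types (mu : probability P R) (nu : {measure set Rd -> \bar R}).

Lemma sqr_sub_integral_relu_le_cost mu1 mu2 (g : probability (P * P)%type R)
    nu1 nu2 (x : Rd) (a1 a2 : R) :
  usphere x -> P2 mu1 -> P2 mu2 -> hproj mu1 nu1 -> hproj mu2 nu2 ->
  coupling mu1 mu2 g ->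
  (\int[nu1]_t (relu (inner t x))%:E = a1%:E)%E ->
  (\int[nu2]_t (relu (inner t x))%:E = a2%:E)%E ->
  (((a1 - a2) ^+ 2)%:E <= \int[g]_z (cone_dist2 z.1 z.2)%:E)%E.
Proof.
move=> x1 mu1_2 mu2_2 h1 h2 g12 i1 i2.
pose F (p : P) := relu p.1 * relu (inner p.2 x).
have mF := measurable_relu_mul_relu_inner x.
have F0 p : 0 <= F p by rewrite mulr_ge0 ?relu_ge0.
have mFE : measurable_fun setT (EFin \o F) by exact/measurable_EFinP.
have F0E p : (0 <= (F p)%:E)%E by rewrite lee_fin.
rewrite (hproj_integral_relu x mu1_2 h1) (coupling_integral_fst g12 mFE F0E) in i1.
rewrite (hproj_integral_relu x mu2_2 h2) (coupling_integral_snd g12 mFE F0E) in i2.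
have gC := coupling_ae_cone g12 mu1_2 mu2_2.
have mc := @measurable_cone_dist2 R d.
have -> : (\int[g]_z (cone_dist2 z.1 z.2)%:E = \int[g]_z (relu (cone_dist2 z.1 z.2))%:E)%E.
  apply: ae_eq_integral => //.
  - exact/measurable_EFinP.
  - by apply/measurable_EFinP; exact: measurable_fun_relu.
  apply: filterS gC => -[[r1 t1] [r2 t2]] [[_ t11] [_ t21]] _ /=.
  by rewrite relu_id ?cone_dist2_ge0.
apply: (sqr_sub_integral_le _ _ _ _ _ _ _ i1 i2).
- exact: measurableT_comp mF measurable_fst.
- exact: measurableT_comp mF measurable_snd.
- exact: measurable_fun_relu.
- by move=> z; exact: F0.
- by move=> z; exact: F0.
- by move=> z; exact: relu_ge0.
apply: filterS gC => -[[r1 t1] [r2 t2]] [[r10 t11] [r20 t21]].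
rewrite relu_id ?cone_dist2_ge0 // /F /= (relu_id r10) (relu_id r20).
exact: sqr_relu_sub_le_cone_dist2.
Qed.

Lemma abs_sub_integral_relu_le_Wt2 nu1 nu2 (x : Rd) (a1 a2 : R) : usphere x ->
  (\int[nu1]_t (relu (inner t x))%:E = a1%:E)%E ->
  (\int[nu2]_t (relu (inner t x))%:E = a2%:E)%E ->
  (`|a1 - a2|%:E <= Wt2 nu1 nu2)%E.
Proof.
move=> x1 i1 i2; apply: le_ereal_inf_tmp => _ [mu1 [mu2 [mu1_2 h1 mu2_2 h2 ->]]].
have cost_ge : (((a1 - a2) ^+ 2)%:E <=
    ereal_inf [set (\int[g]_z (cone_dist2 z.1 z.2)%:E)%E | g in coupling mu1 mu2])%E.
  apply: le_ereal_inf_tmp => _ [g g12 <-].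
  exact: (sqr_sub_integral_relu_le_cost x1 mu1_2 mu2_2 h1 h2 g12 i1 i2).
have -> : `|a1 - a2|%:E = sqrte ((a1 - a2) ^+ 2)%:E by rewrite /sqrte sqrtr_sqr.
by rewrite /W2 lee_sqrt // (le_trans _ cost_ge) // lee_fin sqr_ge0.
Qed.

Lemma Wt2_ge0 nu1 nu2 : (0 <= Wt2 nu1 nu2)%E.
Proof. by apply: le_ereal_inf_tmp => _ [? [? [_ _ _ _ ->]]]; exact: sqrte_ge0. Qed.

Lemma Wt2_admissible nu1 nu2 : (Wt2 nu1 nu2 < +oo)%E ->
  exists mu1 mu2, [/\ P2 mu1, hproj mu1 nu1, P2 mu2 & hproj mu2 nu2].
Proof.
by move=> /ereal_inf_lt[_ [mu1 [mu2 [? ? ? ? _]]] _]; exists mu1, mu2.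
Qed.

Lemma integral_relu_fin_num mu nu (x : Rd) : usphere x -> P2 mu -> hproj mu nu ->
  (nu setT < +oo)%E -> (\int[nu]_t (relu (inner t x))%:E)%E \is a fin_num.
Proof.
move=> x1 mu2 hmu nuT.
rewrite ge0_fin_numE; last by apply: integral_ge0 => t _; rewrite lee_fin relu_ge0.
apply: le_lt_trans nuT.
have mr : measurable_fun setT (fun p : P => relu p.1).
  by apply: measurable_fun_relu; exact: measurable_fst.
have -> : nu setT = (\int[mu]_p (relu p.1)%:E)%E.
  rewrite -[LHS]mul1e -integral_cst // (hproj_integral mu2 hmu) //.
  by apply: eq_integral => p _; rewrite mule1.
rewrite (hproj_integral_relu x mu2 hmu); apply: ae_ge0_le_integral => //.
- by move=> p _; rewrite lee_fin mulr_ge0 ?relu_ge0.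
- by apply/measurable_EFinP; exact: measurable_relu_mul_relu_inner.
- by move=> p _; rewrite lee_fin relu_ge0.
- exact/measurable_EFinP.
apply: filterS (P2_ae_cone mu2) => -[r t] [_ t1] _.
by rewrite lee_fin ler_piMr ?relu_ge0 ?relu_inner_le1.
Qed.

Lemma integral_relu_sub_le_Wt2 nu1 nu2 (x : Rd) : usphere x ->
  (nu1 setT < +oo)%E -> (nu2 setT < +oo)%E -> (Wt2 nu1 nu2 < +oo)%E ->
  exists a1 a2 : R, [/\ (\int[nu1]_t (relu (inner t x))%:E = a1%:E)%E,
    (\int[nu2]_t (relu (inner t x))%:E = a2%:E)%E &
    (`|a1 - a2|%:E <= Wt2 nu1 nu2)%E].
Proof.
move=> x1 nu1T nu2T /Wt2_admissible[mu1 [mu2 [mu1_2 h1 mu2_2 h2]]].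
have /fineK i1 := integral_relu_fin_num x1 mu1_2 h1 nu1T.
have /fineK i2 := integral_relu_fin_num x1 mu2_2 h2 nu2T.
exists (fine (\int[nu1]_t (relu (inner t x))%:E)),
  (fine (\int[nu2]_t (relu (inner t x))%:E)).
split; [by rewrite i1|by rewrite i2|].
exact: abs_sub_integral_relu_le_Wt2 x1 (esym i1) (esym i2).
Qed.

End wasserstein_bound.

Lemma jordan_decomp_finite (R : realType) (d : nat) (nu : {charge set Rd R d -> \bar R})
    (nup num : {measure set Rd R d -> \bar R}) :
  is_jordan_decomp nu nup num -> (nup setT < +oo)%E /\ (num setT < +oo)%E.
Proof.
move=> [nuE _]; have : nu setT \is a fin_num by exact: fin_num_measure.
rewrite nuE //.
have := measure_ge0 nup setT; have := measure_ge0 num setT.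
by case: (nup setT) => [a| |] //; case: (num setT) => [b| |] //= _ _ _; rewrite !ltry.
Qed.

Lemma abs_fnet_sub_le_Wt2 (R : realType) (d : nat) (nu nu' : {charge set Rd R d -> \bar R})
    (nup num nup' num' : {measure set Rd R d -> \bar R}) (x : Rd R d) :
  usphere x -> is_jordan_decomp nu nup num -> is_jordan_decomp nu' nup' num' ->
  (`|fnet x nup num - fnet x nup' num'| <= Wt2 nup nup' + Wt2 num num')%E.
Proof.
move=> x1 /jordan_decomp_finite[nupT numT] /jordan_decomp_finite[nupT' numT'].
have [Wpoo|Wp] := eqVneq (Wt2 nup nup') +oo%E.
  by rewrite Wpoo addye ?leey // gt_eqF // (lt_le_trans _ (Wt2_ge0 _ _)) ?ltNy0.
have [Wmoo|Wm] := eqVneq (Wt2 num num') +oo%E.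
  by rewrite Wmoo addey ?leey // gt_eqF // (lt_le_trans _ (Wt2_ge0 _ _)) ?ltNy0.
have [A [A' [eA eA' hA]]] := integral_relu_sub_le_Wt2 x1 nupT nupT' (eqbRL (ltey _) Wp).
have [B [B' [eB eB' hB]]] := integral_relu_sub_le_Wt2 x1 numT numT' (eqbRL (ltey _) Wm).
rewrite /fnet eA eA' eB eB' -!EFinB; apply: le_trans (leeD hA hB).
rewrite -EFinD lee_fin (_ : A - B - (A' - B') = (A - A') - (B - B')); last by ring.
exact: ler_normB.
Qed.

Theorem mainTheorem13 (R : realType) (d : nat)
  (nu nu' : {charge set Rd R d -> \bar R})
  (nup num nup' num' : {measure set Rd R d -> \bar R}) :
  charge_on_sphere nu -> charge_on_sphere nu' ->
  is_jordan_decomp nu nup num -> is_jordan_decomp nu' nup' num' ->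
  (ereal_sup [set `|fnet x nup num - fnet x nup' num'|%E
             | x in @usphere R d]
   <= (2 * Num.sqrt 2)%:E * maxe (Wt2 nup nup') (Wt2 num num'))%E.
Proof.
move=> _ _ jd jd'; apply: ge_ereal_sup => _ [x x1 <-].
apply: le_trans (abs_fnet_sub_le_Wt2 x1 jd jd') _.
apply: adde_le_mul_maxe; [|exact: Wt2_ge0|exact: Wt2_ge0].
have s1 : 1 <= Num.sqrt 2 :> R by rewrite -[leLHS]sqrtr1 ler_sqrt // ler1n.
by rewrite -[leLHS]mulr1 ler_wpM2l.
Qed.
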